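(* Let $F=K_{a_1,\ldots,a_r}$ be an almost balanced complete $r$-partite graph with $r\ge 2$ and $a_1\ge\cdots\ge a_r\ge 1$, let $\ell=a_1+\cdots+a_r$, and let $m=m_{r,\ell}$. Then \[ \binom{\ell}{2}>m\sum_{k=1}^{r}\binom{a_k}{2}. \]
   Context: $K_{a_1,\ldots,a_r}$ is the complete $r$-partite graph with part sizes $a_1,\ldots,a_r$; it is almost balanced if it is not a complete graph (so $\ell\ge r+1$) and $\binom{a_1-a_r}{2}<a_r$. $m_{r,\ell}$ is the unique integer $k\ge r$ maximizing $f(k)=\frac{(k-1)(k-2)\cdots(k-r+1)}{k^{\ell-1}}$ over all integers $k\ge r$. *)

From mathcomp Require Import all_boot all_order all_algebra.
Set Implicit Arguments. Unset Strict Implicit. Unset Printing Implicit Defensive.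
Import Order.TTheory GRing.Theory Num.Theory.

(* Part sizes are given as a : nat -> nat, with a_1, ..., a_r = a 1, ..., a r. *)

Definition ell_sum (r : nat) (a : nat -> nat) : nat := \sum_(1 <= i < r.+1) a i.

(* K_{a_1,...,a_r} is almost balanced: not a complete graph (l >= r+1)
   and binom(a_1 - a_r, 2) < a_r. *)
Definition almost_balanced (r : nat) (a : nat -> nat) : Prop :=
  (r + 1 <= ell_sum r a)%N /\ ('C(a 1 - a r, 2) < a r)%N.

Definition fmr (r l k : nat) : rat :=
  ((\prod_(1 <= i < r) (k - i)%:R) / (k%:R ^+ (l - 1)))%R.

(* k is an integer >= r maximizing f over all integers >= r
   (the paper's m_{r,l} is the unique such k). *)
Definition is_m_rl (r l k : nat) : Prop :=
  (r <= k)%N /\ forall j : nat, (r <= j)%N -> (fmr r l j <= fmr r l k)%R.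

Definition sum_binom2 (r : nat) (a : nat -> nat) : nat :=
  \sum_(1 <= k < r.+1) 'C(a k, 2).

From Stdlib Require Import ZArith Lia.
From mathcomp Require Import all_boot all_order all_algebra zify.
Import GRing.Theory Num.Theory.
Set Implicit Arguments. Unset Strict Implicit. Unset Printing Implicit Defensive.

(* Write b = a_r, d = a_1 - a_r and x_i = a_i - b, so 0 <= x_i <= d, and put
   X = sum x_i, W = sum x_i^2.  Then l = r b + X, 2 sum C(a_i,2) = sum a_i^2 - l, and
   D := r sum a_i^2 - l^2 = r W - X^2 <= X (r d - X).  Almost balancedness,
   d (d - 1) <= 2 (b - 1), bounds this spread by (r - 1)(l - r), and a refinement of
   that estimate gives a polynomial inequality for D.
   Maximality of m gives f(m - 1) <= f(m), i.e. (m - r) m^(l-1) <= (m - 1)^l; expanding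
   m^l = ((m - 1) + 1)^l to three terms turns this into Q(m - 1) <= 0 for an explicit
   convex quadratic Q with Q(0) <= 0.  The inequality for D says precisely that Q is
   positive at C(l,2) / sum C(a_i,2) - 1, which forces m < C(l,2) / sum C(a_i,2). *)

Section IntegerBounds.
Local Open Scope Z_scope.

Lemma mul_sub_le_of_ratio (p q l Y K : Z) :
  0 < q -> 0 <= l < Y -> q * Y <= p * l -> p * (p - q) <= q * q * K ->
  Y * (Y - l) <= l * l * K.
Proof.
move=> q_gt0 [l_ge0 l_lt_Y] qY_le pq_le.
have le1 : q * Y * (q * Y - q * l) <= p * l * (q * Y - q * l).
  by apply: Z.mul_le_mono_nonneg_r; nia.
have le2 : p * l * (q * Y - q * l) <= p * l * (p * l - q * l).
  by apply: Z.mul_le_mono_nonneg_l; nia.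
have le3 : l * l * (p * (p - q)) <= l * l * (q * q * K) by apply: Z.mul_le_mono_nonneg_l; nia.
by apply/(Z.mul_le_mono_pos_l _ _ (q * q)); nia.
Qed.

Section Spread.
Variables r b d X : Z.
Hypotheses (r_ge2 : 2 <= r) (b_ge1 : 1 <= b) (d_ge0 : 0 <= d) (X_ge0 : 0 <= X).
Hypothesis balanced : d * (d - 1) <= 2 * (b - 1).

(* [Y] bounds D = r W - X^2 from above; [K] is the slack in [Y <= (r - 1)(l - r)]. *)
Local Notation l := (r * b + X).
Local Notation Y := (X * (r * d - X)).
Local Notation K := ((r - 1) * (l - r) - Y).

(* Complete the square in X; the remainder is controlled by [balanced]. *)
Lemma four_slack_ge :
  (2 * X - r * d + r - 1) ^ 2 + r * (r - 2) * (d * d - 1) - 1 <= 4 * K.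
Proof.
have : r * (r - 1) * (d * (d - 1)) <= r * (r - 1) * (2 * (b - 1)).
  by apply: Z.mul_le_mono_nonneg_l; nia.
nia.
Qed.

Lemma slack_ge0 : 0 <= K.
Proof.
have [->|d_neq0] := Z.eq_dec d 0.
  have : 0 <= (r - 1) * (r * (b - 1) + X) by apply: Z.mul_nonneg_nonneg; nia.
  nia.
have := four_slack_ge.
have : 0 <= r * (r - 2) * (d * d - 1) by apply: Z.mul_nonneg_nonneg; nia.
nia.
Qed.

Lemma slack_ge_d_eq1 : d = 1 -> X * (X - 1) <= K.
Proof. by move=> d1; have := four_slack_ge; rewrite d1; nia. Qed.

Lemma slack_ge_d_ge2 : 2 <= d -> 3 * r * (r - 2) - 1 <= 4 * K.
Proof.
move=> d_ge2; have := four_slack_ge.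
have : 0 <= (2 * X - r * d + r - 1) ^ 2 by nia.
have : r * (r - 2) * 3 <= r * (r - 2) * (d * d - 1) by apply: Z.mul_le_mono_nonneg_l; nia.
lia.
Qed.

Lemma spread_le_r_eq2 : r = 2 -> Y <= l.
Proof. by move=> r2; rewrite r2; have := Z.square_nonneg (2 * d - 1 - 2 * X); nia. Qed.

Lemma spread_le_d_ge2 : 2 <= d -> 7 * Y <= 4 * r * l.
Proof.
move=> d_ge2; have := Z.square_nonneg (r * d - 2 * X); have := Z.square_nonneg (d - 4).
have : r * r * (d * (d - 1)) <= r * r * (2 * (b - 1)) by apply: Z.mul_le_mono_nonneg_l; nia.
nia.
Qed.

Lemma spread_sq_le : 0 <= Y -> Y * Y + l * (l - 1) * Y <= l * l * ((r - 1) * (l - r)).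
Proof.
move=> Y_ge0; suff : Y * (Y - l) <= l * l * K by lia.
have K_ge0 := slack_ge0; have l_ge0 : 0 <= l by nia.
have [Y_le_l|l_lt_Y] := Z.le_gt_cases Y l.
  have : 0 <= Y * (l - Y) by apply: Z.mul_nonneg_nonneg; lia.
  have : 0 <= l * l * K by apply: Z.mul_nonneg_nonneg; nia.
  lia.
have [d0|d_neq0] := Z.eq_dec d 0; first by rewrite d0 in l_lt_Y; nia.
have [d1|d_neq1] := Z.eq_dec d 1.
  apply: (@mul_sub_le_of_ratio X 1); try lia.
    by rewrite d1 Z.mul_1_l; apply: Z.mul_le_mono_nonneg_l; nia.
  by have := slack_ge_d_eq1 d1; lia.
have [r2|r_neq2] := Z.eq_dec r 2; first by have := spread_le_r_eq2 r2; lia.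
apply: (@mul_sub_le_of_ratio (4 * r) 7); try lia.
  by have := spread_le_d_ge2 ltac:(lia); lia.
by have := slack_ge_d_ge2 ltac:(lia); nia.
Qed.

Variable W : Z.
Hypothesis W_bounds : 0 <= W <= d * X.
Local Notation D := (r * W - X * X).

Lemma deviation_le_spread : D <= Y.
Proof.
have : r * W <= r * (d * X) by apply: Z.mul_le_mono_nonneg_l; lia.
nia.
Qed.

Lemma deviation_le : D <= (r - 1) * (l - r).
Proof. by have := deviation_le_spread; have := slack_ge0; lia. Qed.

Lemma deviation_poly_lt :
  r + 1 <= l -> D * l * l * (l - 1) + D * D * (l - 2) < l * l * l * ((r - 1) * (l - r)).
Proof.
move=> l_gt_r.
have rhs_gt0 : 0 < l * l * l * ((r - 1) * (l - r)).
  by apply: Z.mul_pos_pos; [nia | apply: Z.mul_pos_pos; lia].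
have [D_le0|D_gt0] := Z.le_gt_cases D 0.
  have D_ge : - (l * l) <= D by nia.
  have : - (l * l) * (l - 2) <= D * (l - 2) by apply: Z.mul_le_mono_nonneg_r; lia.
  have : D * (l * l * (l - 1) + D * (l - 2)) <= 0 by apply: Z.mul_nonpos_nonneg; nia.
  lia.
have D_le_Y := deviation_le_spread.
have Y_sq_le := spread_sq_le ltac:(lia).
have D_sq_le : D * D + l * (l - 1) * D <= Y * Y + l * (l - 1) * Y.
  have ll_ge0 : 0 <= l * (l - 1) by apply: Z.mul_nonneg_nonneg; lia.
  have : 0 <= (Y - D) * (Y + D + l * (l - 1)) by apply: Z.mul_nonneg_nonneg; lia.
  lia.
have : l * (D * D + l * (l - 1) * D) <= l * (l * l * ((r - 1) * (l - r))).
  by apply: Z.mul_le_mono_nonneg_l; lia.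
have : 0 < D * D by apply: Z.mul_pos_pos.
lia.
Qed.
End Spread.

Section Maximizer.
Variables r l s : Z.
Hypotheses (r_ge2 : 2 <= r) (l_gt_r : r + 1 <= l) (s_ge0 : 0 <= s).

Local Notation D := (r * (s + l) - l * l).
Local Notation c := (l * (l - 1)).
Hypothesis D_le : D <= (r - 1) * (l - r).
Hypothesis D_poly_lt :
  D * l * l * (l - 1) + D * D * (l - 2) < l * l * l * ((r - 1) * (l - r)).

Lemma mul_lt_bin2_eq_r : r * s < c.
Proof.
have : 0 < (r - 1) * r by apply: Z.mul_pos_pos; lia.
nia.
Qed.

(* The hypothesis says Q(m - 1) <= 0 for Q(t) = 2(l - r) t^2 + B t - (r - 1) c, while
   [D_poly_lt] says Q(c/s - 1) > 0; since Q(t)/t is increasing, m - 1 < c/s - 1.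
   The argument is run with Q homogenised by s, at t0 = c - s and t = (m - 1) s. *)
Lemma mul_lt_bin2_gt_r (m : Z) : r < m ->
  m * (2 * l * (m - 1) + c) <= r * (2 * (m - 1) * (m - 1) + 2 * l * (m - 1) + c) ->
  m * s < c.
Proof.
move=> m_gt_r bin; apply/Z.nle_gt => c_le.
pose B := 2 * l + c - 2 * r * l.
pose Q t := 2 * (l - r) * t * t + B * s * t - (r - 1) * c * s * s.
pose t0 := c - s; pose t := (m - 1) * s.
have P_lt : s + l < l * l.
  have : 0 < (r - 1) * (l * l - l + r) by apply: Z.mul_pos_pos; nia.
  nia.
have t0_gt0 : 0 < t0 by rewrite /t0; lia.
have t0_le : t0 <= t by rewrite /t0 /t; lia.
have Qt_le0 : Q t <= 0.
  have -> : Q t = s * s * (2 * (l - r) * (m - 1) * (m - 1) + B * (m - 1) - (r - 1) * c).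
    by rewrite /Q /t; ring.
  apply: Z.mul_nonneg_nonpos; first exact: Z.square_nonneg.
  by rewrite /B; lia.
have Qt0_gt0 : 0 < Q t0.
  have E : r * Q t0 = (l - 1) * (l * l * l * ((r - 1) * (l - r))
                                  - (D * l * l * (l - 1) + D * D * (l - 2))).
    by rewrite /Q /t0 /B; ring.
  by rewrite -(Z.mul_pos_cancel_l r) ?E; first apply: Z.mul_pos_pos; lia.
have convex : t0 * Q t - t * Q t0 = (t - t0) * (2 * (l - r) * t * t0 + (r - 1) * c * s * s).
  by rewrite /Q; ring.
have : 0 <= (t - t0) * (2 * (l - r) * t * t0 + (r - 1) * c * s * s).
  apply: Z.mul_nonneg_nonneg; first lia.
  have : 0 <= 2 * (l - r) * t * t0 by do 2?apply: Z.mul_nonneg_nonneg; lia.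
  have : 0 <= (r - 1) * c * s * s by do 4?apply: Z.mul_nonneg_nonneg; lia.
  lia.
have : 0 < t * Q t0 by apply: Z.mul_pos_pos; lia.
have : t0 * Q t <= 0 by apply: Z.mul_nonneg_nonpos; lia.
lia.
Qed.
End Maximizer.

Lemma mul_lt_bin2 (r b d X W l s m : Z) :
  2 <= r -> 1 <= b -> 0 <= d -> d * (d - 1) <= 2 * (b - 1) -> 0 <= X -> 0 <= W <= d * X ->
  l = r * b + X -> r + 1 <= l -> s + l = r * b * b + 2 * b * X + W -> r <= m ->
  (r < m -> m * (2 * l * (m - 1) + l * (l - 1)) <=
            r * (2 * (m - 1) * (m - 1) + 2 * l * (m - 1) + l * (l - 1))) ->
  m * s < l * (l - 1).
Proof.
move=> r_ge2 b_ge1 d_ge0 bal X_ge0 W_bounds l_def l_gt s_def m_ge bin.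
have D_eq : r * (s + l) - l * l = r * W - X * X by rewrite s_def l_def; ring.
have D_le := deviation_le r_ge2 b_ge1 d_ge0 X_ge0 bal W_bounds.
have D_poly_lt := deviation_poly_lt r_ge2 b_ge1 d_ge0 X_ge0 bal W_bounds ltac:(lia).
rewrite -l_def -D_eq in D_le D_poly_lt; have s_ge0 : 0 <= s by nia.
have [<-|m_neq] := Z.eq_dec r m; first exact: mul_lt_bin2_eq_r r_ge2 l_gt s_ge0 D_le.
have m_gt : r < m by lia.
exact: (mul_lt_bin2_gt_r r_ge2 l_gt s_ge0 D_le D_poly_lt m_gt (bin m_gt)).
Qed.
End IntegerBounds.

Lemma mul2_bin2_add n : 2 * 'C(n, 2) + n = n * n.
Proof. by rewrite -mul_bin_diag bin1; case: n => // n; rewrite mulnSr. Qed.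

Lemma nonincreasing_bounds (r : nat) (a : nat -> nat) :
  (forall i, 1 <= i -> i < r -> a i.+1 <= a i) ->
  forall i, 1 <= i <= r -> a r <= a i <= a 1.
Proof.
move=> a_step.
have a_homo : {in [pred i | 1 <= i <= r] &, {homo a : i j / i <= j >-> j <= i}}.
  apply: homo_leq_in => [//|y x z yx zy|i j /andP[i_ge1 _] /andP[_ j_le] k|].
  - exact: leq_trans zy yx.
  - by rewrite inE; lia.
  - by move=> i /andP[i_ge1 _] /andP[_ i_lt]; apply: a_step.
by move=> i i_range; rewrite !a_homo ?inE //; lia.
Qed.

Lemma sum_const_add (m n b : nat) (x : nat -> nat) :
  \sum_(m <= i < n) (b + x i) = (n - m) * b + \sum_(m <= i < n) x i.
Proof. by rewrite big_split sum_nat_const_nat mulnC. Qed.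

Lemma sum_sq_const_add (m n b : nat) (x : nat -> nat) :
  \sum_(m <= i < n) (b + x i) * (b + x i) =
  (n - m) * b * b + 2 * b * \sum_(m <= i < n) x i + \sum_(m <= i < n) x i * x i.
Proof.
rewrite (eq_bigr (fun i => b * b + 2 * b * x i + x i * x i)) => [|i _]; last by nia.
by rewrite !big_split /= sum_nat_const_nat -big_distrr /= mulnA.
Qed.

Lemma mul2_sum_bin2_add (m n : nat) (F : nat -> nat) :
  2 * \sum_(m <= i < n) 'C(F i, 2) + \sum_(m <= i < n) F i = \sum_(m <= i < n) F i * F i.
Proof. by rewrite big_distrr -big_split; apply: eq_bigr => i _; rewrite /= mul2_bin2_add. Qed.

Lemma sum_sq_le (m n d : nat) (x : nat -> nat) :
  (forall i, m <= i < n -> x i <= d) ->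
  \sum_(m <= i < n) x i * x i <= d * \sum_(m <= i < n) x i.
Proof.
move=> x_le; rewrite big_distrr big_nat_cond [leqRHS]big_nat_cond /=.
by apply: leq_sum => i /andP[i_range _]; rewrite leq_mul2r x_le ?orbT.
Qed.

Lemma pow_le_of_fmr_le_succ (r l j : nat) : 2 <= r -> r <= j ->
  (fmr r l j <= fmr r l j.+1)%R -> (j.+1 - r) * j.+1 ^ (l - 1) <= j * j ^ (l - 1).
Proof.
case: r => [|[|s]] // _ j_ge; pose Q := \prod_(1 <= i < s.+1) (j - i).
have prod_j : \prod_(1 <= i < s.+2) (j - i) = Q * (j - s.+1) by rewrite big_nat_recr.
have prod_jS : \prod_(1 <= i < s.+2) (j.+1 - i) = j * Q.
  by rewrite big_ltn // big_add1 subn1; under eq_bigr do rewrite subSS.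
have Q_gt0 : 0 < Q by rewrite /Q big_nat_cond prodn_cond_gt0 // => i /andP[/andP[_ ?] _]; lia.
rewrite /fmr -!natr_prod prod_j prod_jS ler_pdivrMr ?exprn_gt0 ?ltr0n //; last lia.
rewrite mulrAC ler_pdivlMr ?exprn_gt0 ?ltr0n // -!natrX -!natrM ler_nat subSS.
by rewrite [j * Q]mulnC -!mulnA leq_pmul2l.
Qed.

Lemma expS_ge_three_terms (j l : nat) : 2 <= l ->
  (j * j + l * j + 'C(l, 2)) * j ^ (l - 2) <= j.+1 ^ l.
Proof.
case: l => [|[|n]] // _; rewrite !subSS subn0.
elim: n => [|n IHn]; first by rewrite bin2 /=; lia.
rewrite [j.+1 ^ _]expnS binS bin1 expnS.
by apply: leq_trans (leq_mul (leqnn j.+1) IHn); move: (j ^ n) ('C(n.+2, 2)) => p c; nia.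
Qed.

Lemma binomial_le_of_fmr_le_succ (r l j : nat) : 2 <= r -> r <= j -> 2 <= l ->
  (fmr r l j <= fmr r l j.+1)%R ->
  j.+1 * (l * j + 'C(l, 2)) <= r * (j * j + l * j + 'C(l, 2)).
Proof.
move=> r_ge2 j_ge l_ge2 /(pow_le_of_fmr_le_succ r_ge2 j_ge) step.
have low := expS_ge_three_terms j l_ge2.
have p_gt0 : 0 < j ^ (l - 2) by rewrite expn_gt0; lia.
have powS : j.+1 ^ l = j.+1 * j.+1 ^ (l - 1) by rewrite -expnS; congr (_ ^ _); lia.
have pow : j ^ (l - 1) = j * j ^ (l - 2) by rewrite -expnS; congr (_ ^ _); lia.
move: step low; rewrite powS pow; move: (j.+1 ^ (l - 1)) (j ^ (l - 2)) p_gt0 => A p p_gt0 step low.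
set T := j * j + l * j + 'C(l, 2) in low *.
have : (j.+1 - r) * T * p <= j.+1 * (j * j) * p.
  rewrite -mulnA; apply: leq_trans (leq_mul (leqnn _) low) _.
  by rewrite mulnCA; apply: leq_trans (leq_mul (leqnn _) step) _; rewrite !mulnA.
by rewrite leq_pmul2r //; nia.
Qed.

Theorem lemma5p2 (r : nat) (a : nat -> nat) (m : nat) :
  (2 <= r)%N ->
  (forall i : nat, (1 <= i)%N -> (i < r)%N -> (a i.+1 <= a i)%N) ->
  (1 <= a r)%N ->
  almost_balanced r a ->
  is_m_rl r (ell_sum r a) m ->
  (m * sum_binom2 r a < 'C(ell_sum r a, 2))%N.
Proof.
move=> r_ge2 a_step ar_ge1 [l_gt_r balanced] [m_ge_r m_max].
set l := ell_sum r a in l_gt_r m_max *; set S := sum_binom2 r a.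
set b := a r in ar_ge1 balanced *; set d := a 1 - b in balanced *.
pose x i := a i - b.
set X := \sum_(1 <= i < r.+1) x i; set W := \sum_(1 <= i < r.+1) x i * x i.
have a_bounds := nonincreasing_bounds a_step.
have a_eq i : 1 <= i < r.+1 -> a i = b + x i by move=> /a_bounds; rewrite /x; lia.
have l_eq : l = r * b + X by rewrite /l /ell_sum (eq_big_nat _ _ a_eq) sum_const_add subn1.
have sq_eq : \sum_(1 <= i < r.+1) a i * a i = \sum_(1 <= i < r.+1) (b + x i) * (b + x i).
  by apply: eq_big_nat => i /a_eq ->.
have S_eq : 2 * S + l = r * b * b + 2 * b * X + W.
  by rewrite /S /l mul2_sum_bin2_add sq_eq sum_sq_const_add subn1.
have W_le : W <= d * X by apply: sum_sq_le => i /a_bounds; rewrite /x; lia.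
have d_bin2 := mul2_bin2_add d; have l_bin2 := mul2_bin2_add l.
case: m m_ge_r m_max => [|j] m_ge_r m_max; first lia.
have bin : r < j.+1 -> j.+1 * (l * j + 'C(l, 2)) <= r * (j * j + l * j + 'C(l, 2)).
  by move=> j_ge; apply: binomial_le_of_fmr_le_succ; [| | |apply: m_max]; lia.
have := @mul_lt_bin2 (Z.of_nat r) (Z.of_nat b) (Z.of_nat d) (Z.of_nat X) (Z.of_nat W)
  (Z.of_nat l) (Z.of_nat (2 * S)) (Z.of_nat j.+1).
lia.
Qed.
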